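(* Let $(B,\lfloor\cdot,\cdot\rfloor)$ be an SSD space with quadratic form $q$ and let $P\subset B$ be $q$-positive. Then $P$ is premaximally $q$-positive if and only if either $\Phi_P(b)\ge q(b)$ for all $b\in B$, or $P^{\pi}$ is an affine subset of $B$.
   Context: An SSD space is a pair $(B,\lfloor\cdot,\cdot\rfloor)$ with $B$ a nonzero real vector space and $\lfloor\cdot,\cdot\rfloor$ a symmetric bilinear form; $q(b)=\frac12\lfloor b,b\rfloor$. A nonempty $A\subset B$ is $q$-positive if $q(b-c)\ge0$ for all $b,c\in A$; maximally $q$-positive if $q$-positive and not properly contained in another $q$-positive set. For $A\subset B$, $A^{\pi}:=\{b\in B: q(b-a)\ge0\ \forall a\in A\}$. For nonempty $A\subset B$, $\Phi_A:B\to\mathbb{R}\cup\{+\infty\}$, $\Phi_A(x)=\sup_{a\in A}\{\lfloor x,a\rfloor-q(a)\}$. A $q$-positive set $P$ is premaximally $q$-positive if there is a unique maximally $q$-positive set containing $P$. *)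

From HB Require Import structures.
From mathcomp Require Import all_boot all_order all_algebra.
From mathcomp Require Import all_classical all_reals.
From mathcomp Require Import ereal.
Set Implicit Arguments. Unset Strict Implicit. Unset Printing Implicit Defensive.
Import Order.TTheory GRing.Theory Num.Theory.
Local Open Scope ring_scope.
Local Open Scope classical_set_scope.

(* SSD space: a real vector space V (lmodType over a realType R) with a
   symmetric bilinear form bf. *)
Definition sym_bilinear (R : realType) (V : lmodType R) (bf : V -> V -> R) : Prop :=
  (forall u v, bf u v = bf v u) /\
  (forall (a : R) (u v w : V), bf (a *: u + v) w = a * bf u w + bf v w).

Definition qform (R : realType) (V : lmodType R) (bf : V -> V -> R) (b : V) : R :=
  bf b b / 2.

Definition q_positive (R : realType) (V : lmodType R) (bf : V -> V -> R)
  (A : set V) : Prop :=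
  A !=set0 /\ forall b c, A b -> A c -> 0 <= qform bf (b - c).

Definition max_q_positive (R : realType) (V : lmodType R) (bf : V -> V -> R)
  (A : set V) : Prop :=
  q_positive bf A /\ forall A', q_positive bf A' -> A `<=` A' -> A' = A.

Definition pi_set (R : realType) (V : lmodType R) (bf : V -> V -> R)
  (A : set V) : set V :=
  [set b | forall a, A a -> 0 <= qform bf (b - a)].

Definition Phi (R : realType) (V : lmodType R) (bf : V -> V -> R)
  (A : set V) (x : V) : \bar R :=
  ereal_sup [set ((bf x a - qform bf a)%:E) | a in A].

Definition premax_q_positive (R : realType) (V : lmodType R) (bf : V -> V -> R)
  (P : set V) : Prop :=
  q_positive bf P /\
  exists M, [/\ max_q_positive bf M, P `<=` M &
    forall M', max_q_positive bf M' -> P `<=` M' -> M' = M].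

Definition affine_set (R : realType) (V : lmodType R) (A : set V) : Prop :=
  forall x y (t : R), A x -> A y -> A (t *: x + (1 - t) *: y).

From HB Require Import structures.
From mathcomp Require Import all_boot all_order all_algebra.
From mathcomp Require Import all_classical all_reals.
From mathcomp Require Import ereal.
From mathcomp Require Import ring lra.
Set Implicit Arguments. Unset Strict Implicit. Unset Printing Implicit Defensive.
Import Order.TTheory GRing.Theory Num.Theory.
Local Open Scope ring_scope.
Local Open Scope classical_set_scope.

(** [P] is premaximal iff [P^pi] is q-positive: a maximal q-positive set
    containing [P] lies inside [P^pi], and by Zorn's lemma [P ∪ {b}] extends
    to one for every [b] in [P^pi].

    If [Phi_P >= q], take [b, c] in [P^pi] with midpoint [m] and half-difference
    [h]: then [q m <= Phi_P m <= q m + q h], so [q (b - c) = 4 q h >= 0]. If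
    [P^pi] is affine, [t |-> q (c - a + t (b - c))] with [a] in [P] is a
    nonnegative quadratic, so its leading coefficient [q (b - c)] is nonnegative.

    Conversely, let [P^pi] be q-positive and [Phi_P x < q x]. Then
    [q (x - a) >= d > 0] on [P], so [x] can be moved by a small multiple of any
    [y - x] with [y] in [P^pi], and of nonnegative combinations of these, without
    leaving [P^pi]. Every [t b + (1 - t) c - a] is a difference of two such
    directions, and q-positivity of [P^pi] on the two moved points gives
    [q (t b + (1 - t) c - a) >= 0]. *)

Lemma affine_combE (R : realType) (V : lmodType R) (t : R) (b c a : V) :
  t *: b + (1 - t) *: c - a = c - a + t *: (b - c).
Proof. by rewrite scalerBl scale1r scalerBr addrCA addrAC. Qed.

Lemma small_step_bounds (R : realFieldType) (C D d e : R) :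
  0 <= C -> 0 <= D -> 0 < d -> 0 < e -> e * (2 * (C * d + D + d)) <= d ->
  [/\ 2 * e * C <= 1, 2 * e * D <= d & e <= 1].
Proof.
move=> C0 D0 d0 e0 le_ed.
have eD : 0 <= e * D by rewrite mulr_ge0 // ltW.
have eCd : 0 <= e * C * d by rewrite !mulr_ge0 // ltW.
have ed : 0 <= e * d by rewrite mulr_ge0 // ltW.
have expand : e * (2 * (C * d + D + d)) = 2 * (e * C * d) + 2 * (e * D) + 2 * (e * d)
  by ring.
rewrite expand in le_ed; split; try lra; by rewrite -(ler_pM2r d0) mul1r; lra.
Qed.

Lemma quadratic_ge0_lead_ge0 (R : realFieldType) (a b c : R) :
  (forall t, 0 <= a + b * t + c * t ^+ 2) -> 0 <= c.
Proof.
move=> ge0; rewrite leNgt; apply/negP => c_lt0.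
set t := (`|a| + `|b|) / (- c) + 1.
have tc : t * c = - (`|a| + `|b|) + c.
  by rewrite /t; field; rewrite lt_eqF.
have t_ge1 : 1 <= t by rewrite lerDr divr_ge0 ?addr_ge0 // oppr_ge0 ltW.
have := ge0 t; rewrite expr2 mulrA [_ * t * t]mulrC [_ * t]mulrC tc.
have := ler_norm a; have := ler_norm b; have := normr_ge0 a; have := normr_ge0 b.
nra.
Qed.

Section SSDSpace.
Variables (R : realType) (V : lmodType R) (bf : V -> V -> R).
Local Notation q := (qform bf).
Local Notation pi := (pi_set bf).

Lemma extend_max_q_positive (A : set V) :
  q_positive bf A -> exists2 M, max_q_positive bf M & A `<=` M.
Proof.
move=> [A_n0 A_pos].
(* Zorn's lemma is applied to the sets [B] with [B `|` A] pairwise q-positive,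
   so that the union of the empty chain is admissible. *)
pose pairwise_pos (B : set V) := forall b c, B b -> B c -> 0 <= q (b - c).
have [B [B_pos B_max]] :
    exists B, pairwise_pos (B `|` A) /\ forall B', B `<` B' -> ~ pairwise_pos (B' `|` A).
  apply: Zorn_bigcup => F F_pos F_chain b c.
  have inF y : (\bigcup_(X in F) X `|` A) y -> A y \/ exists2 X, F X & X y.
    by move=> [[X FX Xy]|Ay]; [right; exists X|left].
  move=> /inF[Ab|[X FX Xb]] /inF[Ac|[Y FY Yc]].
  - exact: A_pos.
  - by apply: (F_pos Y FY); [right|left].
  - by apply: (F_pos X FX); [left|right].
  - have [XY|YX] := F_chain X Y FX FY.
    + by apply: (F_pos Y FY); left => //; exact: XY.
    + by apply: (F_pos X FX); left => //; exact: YX.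
exists (B `|` A); last by move=> y Ay; right.
split; first by split => //; case: A_n0 => y Ay; exists y; right.
move=> B' [_ B'_pos] sub_B'; apply/seteqP; split => // y B'y; left.
have B'_pos' : pairwise_pos (B' `|` A).
  by move=> b c; rewrite (setUidl (subset_trans (@subsetUr _ B A) sub_B')); exact: B'_pos.
apply: contrapT => NBy; apply: (B_max B') => //; split.
  by move=> z Bz; apply: sub_B'; left.
by move=> B'B; exact/NBy/B'B.
Qed.

Hypothesis bf_sym : sym_bilinear bf.

Lemma bfC u v : bf u v = bf v u.
Proof. exact: (proj1 bf_sym). Qed.

Lemma bf0l w : bf 0 w = 0.
Proof.
have := (proj2 bf_sym) 1 0 0 w; rewrite scale1r addr0 mul1r => E.
by apply: (addrI (bf 0 w)); rewrite addr0 -E.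
Qed.

Lemma bfDl u v w : bf (u + v) w = bf u w + bf v w.
Proof. by have := (proj2 bf_sym) 1 u v w; rewrite scale1r mul1r. Qed.

Lemma bfZl a u w : bf (a *: u) w = a * bf u w.
Proof. by have := (proj2 bf_sym) a u 0 w; rewrite !addr0 bf0l addr0. Qed.

Lemma bfNl u w : bf (- u) w = - bf u w.
Proof. by rewrite -scaleN1r bfZl mulN1r. Qed.

Lemma bfDr u v w : bf w (u + v) = bf w u + bf w v.
Proof. by rewrite !(bfC w) bfDl. Qed.

Lemma bfZr a u w : bf w (a *: u) = a * bf w u.
Proof. by rewrite !(bfC w) bfZl. Qed.

Lemma bfNr u w : bf w (- u) = - bf w u.
Proof. by rewrite !(bfC w) bfNl. Qed.

Lemma qform0 : q 0 = 0.
Proof. by rewrite /qform bf0l mul0r. Qed.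

Lemma qformD u v : q (u + v) = q u + bf u v + q v.
Proof. by rewrite /qform bfDl !bfDr (bfC v u); field. Qed.

Lemma qformZ a u : q (a *: u) = a ^+ 2 * q u.
Proof. by rewrite /qform bfZl bfZr; field. Qed.

Lemma qformN u : q (- u) = q u.
Proof. by rewrite /qform bfNl bfNr opprK. Qed.

Lemma qformB u v : q (u - v) = q u - bf u v + q v.
Proof. by rewrite qformD qformN bfNr. Qed.

Lemma qformBC u v : q (u - v) = q (v - u).
Proof. by rewrite -qformN opprB. Qed.

Section PiSet.
Variable P : set V.

Lemma sub_pi_set : q_positive bf P -> P `<=` pi P.
Proof. by move=> [_ P_pos] b Pb a Pa; exact: P_pos. Qed.

Lemma pi_set_n0 : q_positive bf P -> pi P !=set0.
Proof. by move=> P_pos; case: P_pos.1 => a Pa; exists a; exact: sub_pi_set. Qed.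

Lemma q_positive_sub_pi_set (A : set V) :
  q_positive bf A -> P `<=` A -> A `<=` pi P.
Proof. by move=> [_ A_pos] PA b Ab a Pa; apply: A_pos => //; exact: PA. Qed.

Lemma premax_of_pi_set : q_positive bf P -> q_positive bf (pi P) ->
  premax_q_positive bf P.
Proof.
move=> P_pos pi_pos; split => //; exists (pi P); split.
- split => // A A_pos pi_A; apply/seteqP; split => //.
  by apply: q_positive_sub_pi_set => //; exact: subset_trans (sub_pi_set P_pos) pi_A.
- exact: sub_pi_set.
- move=> M [M_pos M_max] PM.
  by apply/esym/M_max => //; exact: q_positive_sub_pi_set.
Qed.

Lemma pi_set_of_premax : premax_q_positive bf P -> q_positive bf (pi P).
Proof.
move=> [P_pos [M [M_max PM M_uniq]]].
suff pi_M : pi P `<=` M.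
  split=> [|b c /pi_M Mb /pi_M Mc]; [exact: pi_set_n0 | exact: M_max.1.2].
move=> b pib.
have Pb_pos : q_positive bf (P `|` [set b]).
  split; first by exists b; right.
  move=> u v [Pu|->] [Pv|->].
  - exact: P_pos.2.
  - by rewrite qformBC; exact: pib.
  - exact: pib.
  - by rewrite subrr qform0.
have [Mb Mb_max sub_Mb] := extend_max_q_positive Pb_pos.
have -> : M = Mb by apply/esym/M_uniq => // y Py; apply: sub_Mb; left.
by apply: sub_Mb; right.
Qed.

Lemma premax_q_positiveE : q_positive bf P ->
  premax_q_positive bf P <-> q_positive bf (pi P).
Proof.
by move=> P_pos; split; [exact: pi_set_of_premax | exact: premax_of_pi_set].
Qed.

Lemma Phi_le_midpoint m h : pi P (m + h) -> pi P (m - h) ->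
  (Phi bf P m <= (q m + q h)%:E)%E.
Proof.
move=> pi_mDh pi_mBh; apply: ge_ereal_sup => _ [a Pa <-]; rewrite lee_fin.
have := pi_mDh a Pa; rewrite (addrAC m) qformD => le_mDh.
have := pi_mBh a Pa; rewrite (addrAC m) qformB => le_mBh.
have := qformB m a; lra.
Qed.

Lemma pi_set_q_positive_of_Phi : q_positive bf P ->
  (forall b, (q b)%:E <= Phi bf P b)%E -> q_positive bf (pi P).
Proof.
move=> P_pos Phi_ge; split=> [|b c pib pic]; first exact: pi_set_n0.
set h := 2^-1 *: (b - c); set m := c + h.
have hh : h + h = b - c.
  have half : 2^-1 + 2^-1 = 1 :> R by rewrite [RHS]splitr mul1r.
  by rewrite -scalerDl half scale1r.
have pi_mDh : pi P (m + h) by rewrite /m -addrA hh subrKC.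
have pi_mBh : pi P (m - h) by rewrite /m addrK.
have := le_trans (Phi_ge m) (Phi_le_midpoint pi_mDh pi_mBh).
rewrite lee_fin lerDl -hh qformD /qform; lra.
Qed.

Lemma pi_set_q_positive_of_affine : q_positive bf P ->
  affine_set (pi P) -> q_positive bf (pi P).
Proof.
move=> P_pos pi_aff; split=> [|b c pib pic]; first exact: pi_set_n0.
have [a Pa] := P_pos.1.
apply: (@quadratic_ge0_lead_ge0 _ (q (c - a)) (bf (c - a) (b - c))) => t.
have := pi_aff b c t pib pic a Pa.
rewrite affine_combE qformD qformZ bfZr; lra.
Qed.

Lemma Phi_lt_gap x : P !=set0 -> (Phi bf P x < (q x)%:E)%E ->
  exists2 d, 0 < d & forall a, P a -> d <= q (x - a).
Proof.
move=> [a0 Pa0] Phi_lt.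
have ub a : P a -> ((bf x a - q a)%:E <= Phi bf P x)%E.
  by move=> Pa; apply: ereal_sup_ubound; exists a.
move: Phi_lt ub; case: (Phi bf P x) => [r| |] Phi_lt ub.
- exists (q x - r); first by rewrite subr_gt0 -lte_fin.
  by move=> a Pa; have := ub a Pa; rewrite lee_fin qformB; lra.
- by move: Phi_lt; rewrite ltNge leey.
- by have := ub a0 Pa0; rewrite leeNy_eq.
Qed.

End PiSet.

Section Gap.
Variables (P : set V) (x : V) (d : R).
Hypotheses (P_pos : q_positive bf P) (pi_pos : q_positive bf (pi P))
  (d_gt0 : 0 < d) (gap : forall a, P a -> d <= q (x - a)).

(* The lower bound on [bf (x - a) s] is what lets [x] move a little along [s]
   without leaving [pi P]. *)
Definition pi_direction (s : V) := exists C D, [/\ 0 <= C, 0 <= D &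
  forall a, P a -> - C * q (x - a) - D <= bf (x - a) s].

Lemma pi_set_gap_point : pi P x.
Proof. by move=> a Pa; apply: le_trans (ltW d_gt0) (gap Pa). Qed.

Lemma pi_direction_sub y : pi P y -> pi_direction (y - x).
Proof.
move=> pi_y; exists 1, (q (y - x)); split => //.
  exact: pi_pos.2 pi_y pi_set_gap_point.
move=> a Pa; have := pi_y a Pa.
have -> : y - a = (x - a) + (y - x) by rewrite [RHS]addrC addrA subrK.
rewrite qformD; lra.
Qed.

Lemma pi_directionD s1 s2 :
  pi_direction s1 -> pi_direction s2 -> pi_direction (s1 + s2).
Proof.
move=> [C1 [D1 [C1_ge0 D1_ge0 bound1]]] [C2 [D2 [C2_ge0 D2_ge0 bound2]]].
exists (C1 + C2), (D1 + D2); split; try exact: addr_ge0.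
by move=> a Pa; rewrite bfDr; have := bound1 a Pa; have := bound2 a Pa; lra.
Qed.

Lemma pi_directionZ e s : 0 <= e -> pi_direction s -> pi_direction (e *: s).
Proof.
move=> e_ge0 [C [D [C_ge0 D_ge0 bound]]].
exists (e * C), (e * D); split; try exact: mulr_ge0.
move=> a Pa; rewrite bfZr.
have := ler_wpM2l e_ge0 (bound a Pa); lra.
Qed.

Lemma pi_direction_near s : pi_direction s ->
  exists2 e0, 0 < e0 & forall e, 0 < e -> e <= e0 -> pi P (x + e *: s).
Proof.
move=> [C [D [C_ge0 D_ge0 bound]]].
have Q_ge0 := normr_ge0 (q s); have Cd_ge0 := mulr_ge0 C_ge0 (ltW d_gt0).
have Z_gt0 : 0 < 2 * (C * d + (D + `|q s|) + d).
  by rewrite mulr_gt0 //; apply: ltr_wpDl d_gt0; rewrite !addr_ge0.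
(* This step size gives [e C <= 1/2] and [e (D + |q s|) <= d/2], hence
   [q (x + e s - a) >= q (x - a) / 2 - d / 2 >= 0]. *)
exists (d / (2 * (C * d + (D + `|q s|) + d))); first exact: divr_gt0.
move=> e e_gt0; rewrite ler_pdivlMr // => le_e a Pa.
have [eC_le eD_le e_le1] :=
  small_step_bounds C_ge0 (addr_ge0 D_ge0 Q_ge0) d_gt0 e_gt0 le_e.
rewrite addrAC qformD qformZ bfZr.
have qxa_ge := gap Pa; have qxa_ge0 := le_trans (ltW d_gt0) qxa_ge.
have bound_e := ler_wpM2l (ltW e_gt0) (bound a Pa).
have eCq : (e * C) * q (x - a) <= 2^-1 * q (x - a).
  by apply: ler_wpM2r; lra.
have e2Q : e ^+ 2 * `|q s| <= e * `|q s|.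
  by rewrite expr2 -mulrA ler_piMl // mulr_ge0 // ltW.
have e2q : - (e ^+ 2 * `|q s|) <= e ^+ 2 * q s.
  by rewrite -mulrN ler_wpM2l ?sqr_ge0 // lerNnormlW.
nra.
Qed.

Definition direction_diff (v : V) :=
  exists p m, [/\ pi_direction p, pi_direction m & v = p - m].

Lemma direction_diff_sub y z : pi P y -> pi P z -> direction_diff (y - z).
Proof.
move=> pi_y pi_z; exists (y - x), (z - x); split; try exact: pi_direction_sub.
by rewrite opprB addrA subrK.
Qed.

Lemma direction_diffD v w :
  direction_diff v -> direction_diff w -> direction_diff (v + w).
Proof.
move=> [p1 [m1 [p1_dir m1_dir ->]]] [p2 [m2 [p2_dir m2_dir ->]]].
exists (p1 + p2), (m1 + m2); split; try exact: pi_directionD.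
by rewrite opprD addrACA.
Qed.

Lemma direction_diffZ t v : direction_diff v -> direction_diff (t *: v).
Proof.
move=> [p [m [p_dir m_dir ->]]].
have [t_ge0|t_lt0] := leP 0 t.
  by exists (t *: p), (t *: m); split; try exact: pi_directionZ; rewrite scalerBr.
have Nt_ge0 : 0 <= - t by rewrite oppr_ge0 ltW.
exists (- t *: m), (- t *: p); split; try exact: pi_directionZ.
by rewrite scalerBr !scaleNr opprK addrC.
Qed.

(* Moving [x] by [e *: p] and by [e *: m] stays in [pi P] for a common small
   [e], and [q (e *: (p - m)) = e ^+ 2 * q (p - m)]. *)
Lemma direction_diff_q_ge0 v : direction_diff v -> 0 <= q v.
Proof.
move=> [p [m [/pi_direction_near[e1 e1_gt0 near_p]
              /pi_direction_near[e2 e2_gt0 near_m] ->]]].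
set e := Num.min e1 e2.
have e_gt0 : 0 < e by rewrite lt_min e1_gt0.
have /andP[le_e1 le_e2] : (e <= e1) && (e <= e2) by rewrite -le_min.
have := pi_pos.2 _ _ (near_p e e_gt0 le_e1) (near_m e e_gt0 le_e2).
rewrite opprD addrACA subrr add0r -scalerBr qformZ.
by rewrite pmulr_rge0 // exprn_gt0.
Qed.

Lemma pi_set_affine_of_gap : affine_set (pi P).
Proof.
move=> b c t pi_b pi_c a Pa; rewrite affine_combE.
apply/direction_diff_q_ge0/direction_diffD.
  exact/direction_diff_sub/sub_pi_set.
exact/direction_diffZ/direction_diff_sub.
Qed.

End Gap.
End SSDSpace.

Theorem mainTheorem3 (R : realType) (V : lmodType R) (bf : V -> V -> R)
  (P : set V) :
  (exists v : V, v != 0) -> sym_bilinear bf -> q_positive bf P ->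
  (premax_q_positive bf P <->
   ((forall b : V, ((qform bf b)%:E <= Phi bf P b)%E) \/ affine_set (pi_set bf P))).
Proof.
move=> _ bf_sym P_pos; rewrite premax_q_positiveE //; split; last first.
  case=> [Phi_ge | pi_aff].
    exact: pi_set_q_positive_of_Phi.
  exact: pi_set_q_positive_of_affine.
move=> pi_pos.
have [Phi_ge | /existsNP[x /negP]] :=
  pselect (forall b : V, ((qform bf b)%:E <= Phi bf P b)%E); first by left.
rewrite -ltNge => Phi_lt; right.
have [d d_gt0 gap] := Phi_lt_gap bf_sym P_pos.1 Phi_lt.
exact: pi_set_affine_of_gap gap.
Qed.
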